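(* Let $0<d<\pi/2$, let $c_d=1+1/\cos(\frac\pi2\sin d)$ and $\tilde c_d=\frac{1+\log(1+c_d)}{\log(1+c_d)}c_d$. Then \[ \sup_{|\Im\zeta|\le d}\left|\frac{1+\log(1+e^{\pi\sinh\zeta})}{\log(1+e^{\pi\sinh\zeta})}\cdot\frac{1}{1+e^{-\pi\sinh\zeta}}\right|\le\tilde c_d, \] \[ \sup_{x\in\mathbb{R}}\left\{\frac{1+\log(1+e^{\pi\sinh x})}{\log(1+e^{\pi\sinh x})}\cdot\frac{1}{1+e^{-\pi\sinh x}}\right\}\le e^{\pi/12}. \]
   Context: $\log$ denotes the principal branch of the complex logarithm. *)

From Stdlib Require Import Reals.
From Coquelicot Require Import Coquelicot.
Open Scope R_scope.

Definition Cexp (z : C) : C :=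
  (exp (fst z) * cos (snd z), exp (fst z) * sin (snd z)).

(* principal argument, with values in (-pi, pi]  (Carg 0 = 0, irrelevant) *)
Definition Carg (z : C) : R :=
  if Rle_dec 0 (snd z) then acos (fst z / Cmod z) else - acos (fst z / Cmod z).

Definition Clog (z : C) : C := (ln (Cmod z), Carg z).

Definition Csinh (z : C) : C := ((Cexp z - Cexp (- z)) / 2)%C.

Definition c_d (d : R) : R := 1 + 1 / cos (PI / 2 * sin d).
Definition ct_d (d : R) : R :=
  (1 + ln (1 + c_d d)) / ln (1 + c_d d) * c_d d.

Definition Fc (z : C) : C :=
  let w := (RtoC PI * Csinh z)%C in
  ((1 + Clog (1 + Cexp w)) / Clog (1 + Cexp w) * (1 / (1 + Cexp (- w))))%C.

Definition Fr (x : R) : R :=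
  let w := PI * sinh x in
  (1 + ln (1 + exp w)) / ln (1 + exp w) * (1 / (1 + exp (- w))).

From Stdlib Require Import Reals Lra Psatz Machin.
From Coquelicot Require Import Coquelicot.
Open Scope R_scope.

(* Write w = PI sinh z, L = log (1 + e^w) and V = |e^w / (1 + e^w)|; the modulus of the
   function in the first supremum is at most (1 + |L|) / |L| * V.  Since e^w / (1 + e^w) =
   1 - e^(-L), the bound |1 - e^u| <= e^|u| - 1 gives |L| >= log (1 + V), and as
   V / log (1 + V) increases with V it suffices that V <= c_d.  For Re w >= 0 this follows
   from |1 + e^w| >= cos (PI/2 sin d) on the strip |Im z| <= d, and for Re w < 0 from the
   same bound at -z, since then V = 1 / |1 + e^(-w)|.
   On the real line the function equals (1 + S) (1 - e^(-S)) / S with S = log (1 + e^w) > 0;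
   its maximum is about 1.2984, and the bound 1.299 < e^(PI/12) is checked with Taylor
   polynomials of exp. *)

Lemma exp_sub_one_sq_le_nonneg t rho : 0 <= t <= rho ->
  (exp t - 1) ^ 2 + exp t * (rho ^ 2 - t ^ 2) <= (exp rho - 1) ^ 2.
Proof.
intros [Ht Htr].
pose proof (exp_pos t) as Et.
assert (Hdiff : exp t * (rho - t) <= exp rho - exp t).
{ replace (exp rho) with (exp t * exp (rho - t)) by (rewrite <- exp_plus; f_equal; ring).
  pose proof (exp_ineq1_le (rho - t)); nra. }
assert (Hsum : rho + t <= exp rho + exp t - 2).
{ pose proof (exp_ineq1_le rho); pose proof (exp_ineq1_le t); lra. }
assert (0 <= exp t * (rho - t)) by nra.
assert (exp t * (rho - t) * (rho + t) <= (exp rho - exp t) * (exp rho + exp t - 2))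
  by (apply Rmult_le_compat; lra).
nra.
Qed.

Lemma exp_sub_one_sq_le t rho : Rabs t <= rho ->
  (exp t - 1) ^ 2 + exp t * (rho ^ 2 - t ^ 2) <= (exp rho - 1) ^ 2.
Proof.
intros Ht.
destruct (Rle_lt_dec 0 t) as [Hpos | Hneg].
{ apply exp_sub_one_sq_le_nonneg. rewrite Rabs_right in Ht; lra. }
rewrite Rabs_left in Ht by lra.
eapply Rle_trans; [| apply (exp_sub_one_sq_le_nonneg (- t)); lra].
(* the left-hand side at t < 0 is dominated by its value at -t *)
assert (Hinv : exp t * exp (- t) = 1) by (rewrite <- exp_plus, Rplus_opp_r; apply exp_0).
assert (Hlt : exp t < 1) by (rewrite <- exp_0; apply exp_increasing; lra).
pose proof (exp_pos t). pose proof (exp_pos (- t)).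
assert (Hsq : (exp t - 1) ^ 2 <= (exp (- t) - 1) ^ 2).
{ replace (exp t - 1) with (exp t - exp t * exp (- t)) by (rewrite Hinv; ring).
  replace ((exp t - exp t * exp (- t)) ^ 2) with (exp t ^ 2 * (exp (- t) - 1) ^ 2) by ring.
  assert (exp t ^ 2 <= 1) by nra. pose proof (pow2_ge_0 (exp (- t) - 1)). nra. }
assert (exp t * (rho ^ 2 - t ^ 2) <= exp (- t) * (rho ^ 2 - (- t) ^ 2)).
{ replace ((- t) ^ 2) with (t ^ 2) by ring. apply Rmult_le_compat_r; nra. }
lra.
Qed.

Lemma cos_ge_one_sub_sq_half phi : 0 <= phi <= PI -> 1 - phi ^ 2 / 2 <= cos phi.
Proof.
intros Hphi.
replace phi with (2 * (phi / 2)) at 2 by field.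
rewrite cos_2a_sin.
assert (0 <= sin (phi / 2)) by (apply sin_ge_0; lra).
assert (sin (phi / 2) <= phi / 2).
{ destruct (Req_dec phi 0) as [->|]; [rewrite Rdiv_0_l, sin_0; lra|].
  apply Rlt_le, sin_lt_x; lra. }
nra.
Qed.

Lemma one_sub_exp_polar_sq_le t phi : 0 <= phi <= PI ->
  1 - 2 * exp t * cos phi + exp t ^ 2 <= (exp (sqrt (t ^ 2 + phi ^ 2)) - 1) ^ 2.
Proof.
intros Hphi.
set (rho := sqrt (t ^ 2 + phi ^ 2)).
assert (Hrho2 : rho ^ 2 = t ^ 2 + phi ^ 2)
  by (unfold rho; rewrite <- Rsqr_pow2, Rsqr_sqrt; nra).
assert (Ht : Rabs t <= rho).
{ rewrite <- sqrt_Rsqr_abs. apply sqrt_le_1_alt. unfold Rsqr. nra. }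
pose proof (exp_sub_one_sq_le t rho Ht) as Hexp.
pose proof (cos_ge_one_sub_sq_half phi Hphi).
pose proof (exp_pos t).
rewrite Hrho2 in Hexp.
nra.
Qed.

Lemma Rinv_nonneg x : 0 <= x -> 0 <= / x.
Proof.
intros [Hx | <-]; [apply Rlt_le, Rinv_0_lt_compat, Hx | rewrite Rinv_0; apply Rle_refl].
Qed.

Lemma ln_one_add_mul_ge lam c : 0 <= lam <= 1 -> 0 <= c ->
  lam * ln (1 + c) <= ln (1 + lam * c).
Proof.
intros Hlam Hc.
set (L := ln (1 + c)).
assert (HL : exp L = 1 + c) by (apply exp_ln; lra).
set (E := exp (lam * L)).
assert (HE : 0 < E) by apply exp_pos.
(* convexity of exp: exp (lam L) <= (1 - lam) exp 0 + lam exp L *)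
assert (Hright : E * (1 + (1 - lam) * L) <= exp L).
{ replace L with (lam * L + (1 - lam) * L) at 2 by ring. rewrite exp_plus; fold E.
  apply Rmult_le_compat_l; [lra | apply exp_ineq1_le]. }
assert (Hleft : E * (1 - lam * L) <= 1).
{ replace 1 with (E * exp (- (lam * L))) at 2
    by (unfold E; rewrite <- exp_plus, Rplus_opp_r; apply exp_0).
  apply Rmult_le_compat_l; [lra|]. pose proof (exp_ineq1_le (- (lam * L))); lra. }
rewrite <- (ln_exp (lam * L)). apply ln_le; [exact HE|]. fold E.
assert (Hmix : lam * (E * (1 + (1 - lam) * L)) + (1 - lam) * (E * (1 - lam * L))
        <= lam * exp L + (1 - lam) * 1)
  by (apply Rplus_le_compat; apply Rmult_le_compat_l; lra).
replace (lam * (E * (1 + (1 - lam) * L)) + (1 - lam) * (E * (1 - lam * L))) with E in Hmix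
  by ring.
rewrite HL in Hmix. lra.
Qed.

Lemma div_ln_one_add_le V c : 0 < V <= c -> V / ln (1 + V) <= c / ln (1 + c).
Proof.
intros [HV HVc].
assert (HlnV : 0 < ln (1 + V)) by (rewrite <- ln_1; apply ln_increasing; lra).
assert (Hlnc : 0 < ln (1 + c)) by (rewrite <- ln_1; apply ln_increasing; lra).
pose proof (ln_one_add_mul_ge (V / c) c) as Hconc.
replace (V / c * c) with V in Hconc by (field; lra).
assert (Hfrac : 0 <= V / c <= 1).
{ split; [apply Rlt_le, Rdiv_lt_0_compat; lra|].
  apply Rmult_le_reg_r with c; [lra|]. unfold Rdiv; rewrite Rmult_assoc, Rinv_l; lra. }
specialize (Hconc Hfrac ltac:(lra)).
apply Rmult_le_reg_r with (ln (1 + V) * ln (1 + c)); [nra|].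
replace (V / ln (1 + V) * (ln (1 + V) * ln (1 + c))) with (V * ln (1 + c)) by (field; lra).
replace (c / ln (1 + c) * (ln (1 + V) * ln (1 + c))) with (c * ln (1 + V)) by (field; lra).
replace (V * ln (1 + c)) with (c * (V / c * ln (1 + c))) by (field; lra).
apply Rmult_le_compat_l; lra.
Qed.

Lemma one_add_div_mul_le V rho c : 0 <= V <= c -> ln (1 + V) <= rho ->
  (1 + rho) / rho * V <= (1 + ln (1 + c)) / ln (1 + c) * c.
Proof.
intros [[HV | <-] HVc] Hrho.
2: { assert (0 <= ln (1 + c)) by (rewrite <- ln_1; apply ln_le; lra).
     rewrite Rmult_0_r. apply Rmult_le_pos; [|lra].
     apply Rmult_le_pos; [lra | apply Rinv_nonneg; lra]. }
assert (HlnV : 0 < ln (1 + V)) by (rewrite <- ln_1; apply ln_increasing; lra).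
assert (Hlnc : 0 < ln (1 + c)) by (rewrite <- ln_1; apply ln_increasing; lra).
pose proof (div_ln_one_add_le V c ltac:(lra)).
replace ((1 + rho) / rho * V) with (V + V / rho) by (field; lra).
replace ((1 + ln (1 + c)) / ln (1 + c) * c) with (c + c / ln (1 + c)) by (field; lra).
enough (V / rho <= V / ln (1 + V)) by lra.
apply Rmult_le_compat_l; [lra|]. apply Rinv_le_contravar; lra.
Qed.

(* also at u = 0, where Coquelicot's inverse is 0 *)
Lemma Cmod_Cinv (u : C) : Cmod (/ u) = / Cmod u.
Proof.
destruct (Req_dec (Cmod u) 0) as [Hu | Hu].
- apply Cmod_eq_0 in Hu as ->. rewrite Cmod_0, Rinv_0.
  unfold Cinv; cbn; rewrite !Rmult_0_l, Rplus_0_l, Ropp_0, Rdiv_0_l. apply Cmod_0.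
- apply Cmod_inv. intros ->. apply Hu, Cmod_0.
Qed.

Lemma Cmod_Cexp (w : C) : Cmod (Cexp w) = exp (Re w).
Proof.
unfold Cmod, Cexp; cbn [fst snd].
replace ((exp (fst w) * cos (snd w)) ^ 2 + (exp (fst w) * sin (snd w)) ^ 2)
  with (exp (fst w) ^ 2) by (pose proof (sin2_cos2 (snd w)); unfold Rsqr in *; nra).
rewrite <- Rsqr_pow2. apply sqrt_Rsqr, Rlt_le, exp_pos.
Qed.

Lemma Cexp_opp_mul (w : C) : (Cexp (- w) * Cexp w)%C = 1%C.
Proof.
destruct w as [a b].
assert (Hinv : exp (- a) * exp a = 1) by (rewrite <- exp_plus, Rplus_opp_l; apply exp_0).
pose proof (sin2_cos2 b) as Hsc. unfold Rsqr in Hsc.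
unfold Cexp; apply injective_projections; cbn; rewrite ?cos_neg, ?sin_neg; nra.
Qed.

Lemma Cmod_one_add_Cexp_sq (w : C) :
  Cmod (1 + Cexp w) ^ 2 = 1 + 2 * exp (Re w) * cos (Im w) + exp (Re w) ^ 2.
Proof.
rewrite Cmod2_alt. destruct w as [a b]. unfold Cexp; cbn.
pose proof (sin2_cos2 b) as Hsc. unfold Rsqr in Hsc. nra.
Qed.

Lemma Cmod_Clog (u : C) :
  Cmod (Clog u) = sqrt (ln (Cmod u) ^ 2 + acos (Re u / Cmod u) ^ 2).
Proof.
unfold Clog, Carg, Cmod at 1; cbn [fst snd].
destruct (Rle_dec 0 (snd u)); [reflexivity|]. unfold Re. f_equal. ring.
Qed.

Lemma ln_one_add_Cmod_div_le (u : C) :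
  ln (1 + Cmod (u - 1) / Cmod u) <= Cmod (Clog u).
Proof.
destruct (Req_dec (Cmod u) 0) as [H0 | H0].
{ rewrite H0, Rdiv_0_r, Rplus_0_r, ln_1. apply Cmod_ge_0. }
assert (Hr : 0 < Cmod u) by (pose proof (Cmod_ge_0 u); lra).
set (r := Cmod u) in *.
assert (Hre : Rabs (Re u) <= r) by apply re_le_Cmod.
assert (Hcos : -1 <= Re u / r <= 1).
{ apply Rabs_le_between. unfold Rdiv. rewrite Rabs_mult, Rabs_inv, (Rabs_right r) by lra.
  apply Rmult_le_reg_r with r; [lra|]. rewrite Rmult_assoc, Rinv_l; lra. }
assert (Hphi : 0 <= acos (Re u / r) <= PI) by apply acos_bound.
pose proof (one_sub_exp_polar_sq_le (- ln r) _ Hphi) as Hpolar.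
rewrite exp_Ropp, exp_ln, cos_acos in Hpolar by assumption.
rewrite Cmod_Clog. fold r. replace (ln r ^ 2) with ((- ln r) ^ 2) by ring.
set (rho := sqrt ((- ln r) ^ 2 + acos (Re u / r) ^ 2)) in *.
set (V := Cmod (u - 1) / r).
assert (HV : 0 <= V) by (apply Rdiv_le_0_compat; [apply Cmod_ge_0 | lra]).
assert (HV2 : V ^ 2 = 1 - 2 * / r * (Re u / r) + (/ r) ^ 2).
{ unfold V. replace ((Cmod (u - 1) / r) ^ 2) with (Cmod (u - 1) ^ 2 / r ^ 2) by (field; lra).
  replace (Cmod (u - 1) ^ 2) with (r ^ 2 - 2 * Re u + 1).
  - field. lra.
  - unfold r. rewrite !Cmod2_alt. destruct u as [x y]. cbn. ring. }
assert (Hrho : 0 <= rho) by apply sqrt_pos.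
assert (V <= exp rho - 1) by (pose proof (exp_ineq1_le rho); nra).
rewrite <- (ln_exp rho). apply ln_le; lra.
Qed.

Lemma Cmod_one_add_Cexp_opp (w : C) :
  Cmod (1 + Cexp (- w)) * exp (Re w) = Cmod (1 + Cexp w).
Proof.
rewrite <- Cmod_Cexp, <- Cmod_mult. f_equal.
replace (Cexp w) with (Cexp (- w) * Cexp w + Cexp w - 1)%C at 2
  by (rewrite Cexp_opp_mul; ring).
ring.
Qed.

Lemma Cmod_log_quotient_le (w : C) :
  Cmod ((1 + Clog (1 + Cexp w)) / Clog (1 + Cexp w) * (1 / (1 + Cexp (- w))))
  <= (1 + Cmod (Clog (1 + Cexp w))) / Cmod (Clog (1 + Cexp w))
     * (Cmod (Cexp w) / Cmod (1 + Cexp w)).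
Proof.
set (L := Clog (1 + Cexp w)).
unfold Cdiv. rewrite !Cmod_mult, !Cmod_Cinv, Cmod_1, Rmult_1_l.
rewrite <- (Cmod_one_add_Cexp_opp w), Cmod_Cexp. unfold Rdiv at 2. rewrite Rinv_mult.
set (X := Cmod (1 + Cexp (- w))).
replace (exp (Re w) * (/ X * / exp (Re w))) with (/ X)
  by (rewrite (Rmult_comm (/ X)), <- Rmult_assoc, Rinv_r, Rmult_1_l;
      [reflexivity | apply exp_neq_0]).
apply Rmult_le_compat_r; [apply Rinv_nonneg, Cmod_ge_0|].
apply Rmult_le_compat_r; [apply Rinv_nonneg, Cmod_ge_0|].
rewrite <- Cmod_1 at 2. apply Cmod_triangle.
Qed.

Lemma one_add_exp_sq_ge a b theta : 0 <= theta <= PI / 2 -> 0 <= a ->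
  Rabs b <= PI / 2 + theta \/ PI / 2 - theta <= a ->
  cos theta ^ 2 <= 1 + 2 * exp a * cos b + exp a ^ 2.
Proof.
intros Htheta Ha Hcases.
pose proof PI_RGT_0.
assert (Hm : 0 <= cos theta <= 1) by (split; [apply cos_ge_0 | apply COS_bound]; lra).
pose proof (COS_bound b).
pose proof (exp_pos a).
assert (Hsplit : 1 + 2 * exp a * cos b + exp a ^ 2 = sin b ^ 2 + (exp a + cos b) ^ 2)
  by (pose proof (sin2_cos2 b); unfold Rsqr in *; nra).
rewrite Hsplit.
destruct (Rle_lt_dec 0 (cos b)) as [Hcos | Hcos].
{ assert (0 <= exp a * cos b) by nra. pose proof (sin2_cos2 b). unfold Rsqr in *. nra. }
assert (Hcos_abs : cos (Rabs b) = cos b)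
  by (unfold Rabs; destruct (Rcase_abs b); [apply cos_neg | reflexivity]).
assert (Hsin_abs : sin (Rabs b) ^ 2 = sin b ^ 2)
  by (unfold Rabs; destruct (Rcase_abs b); [rewrite sin_neg; ring | reflexivity]).
assert (Hb : PI / 2 < Rabs b).
{ destruct (Rle_lt_dec (Rabs b) (PI / 2)); [|lra].
  pose proof (cos_ge_0 (Rabs b) ltac:(pose proof (Rabs_pos b); lra) ltac:(lra)). lra. }
destruct Hcases as [Hsmall | Hlarge].
- assert (cos theta <= sin (Rabs b)).
  { rewrite <- cos_shift, <- (cos_neg (PI / 2 - Rabs b)).
    apply cos_decr_1; lra. }
  rewrite <- Hsin_abs. pose proof (pow2_ge_0 (exp a + cos b)). nra.
- (* here cos theta = sin (PI/2 - theta) <= PI/2 - theta <= a <= exp a - 1 *)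
  assert (cos theta <= PI / 2 - theta).
  { rewrite <- sin_shift.
    destruct (Req_dec theta (PI / 2)) as [-> | Hne]; [rewrite Rminus_diag, sin_0; lra|].
    apply Rlt_le, sin_lt_x; lra. }
  pose proof (exp_ineq1_le a).
  assert (cos theta <= exp a + cos b) by lra.
  pose proof (pow2_ge_0 (sin b)). nra.
Qed.

Lemma sinh_cos_ge_of_cosh_sin_gt C S c s sigma :
  C ^ 2 - S ^ 2 = 1 -> c ^ 2 + s ^ 2 = 1 -> 0 < C -> 0 <= s <= sigma ->
  (1 + sigma) / 2 < C * s -> 0 <= S * c -> (1 - sigma) / 2 <= S * c.
Proof.
intros HCS Hcs HC Hs HCs HSc.
destruct (Rle_lt_dec 1 sigma) as [Hsig | Hsig]; [lra|].
set (p := (1 + sigma) / 2) in *.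
assert (Hsp : s <= 2 * p - 1) by (unfold p; lra).
assert (Hs_pos : 0 < s).
{ destruct (Req_dec s 0) as [Hs0 | Hs0]; [|lra].
  rewrite Hs0, Rmult_0_r in HCs. unfold p in HCs; lra. }
assert (Hp : 1 / 2 < p < 1) by (unfold p; lra).
assert (Hs2 : s ^ 2 <= (2 * p - 1) ^ 2) by (apply pow_incr; lra).
(* (S c)^2 s^2 = ((C s)^2 - s^2)(1 - s^2) is bounded below at the extreme value s = 2p - 1 *)
assert (Hlow : s ^ 2 * (1 - p) ^ 2 <= (p ^ 2 - s ^ 2) * (1 - s ^ 2)).
{ assert (F1 : (1 - p) * (3 * p - 1) <= p ^ 2 - s ^ 2) by nra.
  assert (F2 : 4 * p * (1 - p) <= 1 - s ^ 2) by nra.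
  assert (s ^ 2 * (1 - p) ^ 2 <= (1 - p) * (3 * p - 1) * (4 * p * (1 - p))).
  { replace ((1 - p) * (3 * p - 1) * (4 * p * (1 - p))) with (4 * p * (3 * p - 1) * (1 - p) ^ 2)
      by ring.
    apply Rmult_le_compat_r; [apply pow2_ge_0 | nra]. }
  assert ((1 - p) * (3 * p - 1) * (4 * p * (1 - p)) <= (p ^ 2 - s ^ 2) * (1 - s ^ 2))
    by (apply Rmult_le_compat; nra).
  lra. }
assert (Hup : (p ^ 2 - s ^ 2) * (1 - s ^ 2) <= (S * c) ^ 2 * s ^ 2).
{ replace ((S * c) ^ 2 * s ^ 2) with ((C ^ 2 - 1) * (1 - s ^ 2) * s ^ 2)
    by (replace (C ^ 2 - 1) with (S ^ 2) by lra; replace (1 - s ^ 2) with (c ^ 2) by lra; ring).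
  replace ((C ^ 2 - 1) * (1 - s ^ 2) * s ^ 2) with (((C * s) ^ 2 - s ^ 2) * (1 - s ^ 2)) by ring.
  apply Rmult_le_compat_r; [nra|].
  assert (p ^ 2 <= (C * s) ^ 2) by (apply pow_incr; lra). lra. }
assert (Hsq : (1 - p) ^ 2 <= (S * c) ^ 2).
{ apply Rmult_le_reg_r with (s ^ 2); [nra|]. lra. }
unfold p in Hsq. nra.
Qed.

Lemma cosh_sq_sub_sinh_sq x : cosh x ^ 2 - sinh x ^ 2 = 1.
Proof.
unfold cosh, sinh.
rewrite <- (exp_0), <- (Rplus_opp_r x) at 1. rewrite exp_plus. field.
Qed.

Lemma cosh_pos x : 0 < cosh x.
Proof. unfold cosh. pose proof (exp_pos x). pose proof (exp_pos (- x)). lra. Qed.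

Lemma Rabs_sin_le d y : 0 <= d <= PI / 2 -> Rabs y <= d -> Rabs (sin y) <= sin d.
Proof.
intros Hd Hy. apply Rabs_le_between in Hy.
apply Rabs_le_between. rewrite <- sin_neg.
split; apply sin_incr_1; lra.
Qed.

Lemma one_add_exp_strip_sq_ge d x y : 0 < d < PI / 2 -> Rabs y <= d ->
  0 <= sinh x * cos y ->
  cos (PI / 2 * sin d) ^ 2
  <= 1 + 2 * exp (PI * (sinh x * cos y)) * cos (PI * (cosh x * sin y))
     + exp (PI * (sinh x * cos y)) ^ 2.
Proof.
intros Hd Hy Hre.
pose proof PI_RGT_0.
assert (Hsd : 0 < sin d <= 1) by (split; [apply sin_gt_0 | apply SIN_bound]; lra).
apply one_add_exp_sq_ge; [nra | apply Rmult_le_pos; lra |].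
destruct (Rle_lt_dec (Rabs (PI * (cosh x * sin y))) (PI / 2 + PI / 2 * sin d))
  as [Hsmall | Hlarge]; [left; exact Hsmall | right].
rewrite Rabs_mult, Rabs_mult, (Rabs_right PI), (Rabs_right (cosh x)) in Hlarge
  by (apply Rle_ge, Rlt_le; first [apply cosh_pos | lra]).
assert (Hcos : cos y ^ 2 + Rabs (sin y) ^ 2 = 1)
  by (rewrite pow2_abs; pose proof (sin2_cos2 y); unfold Rsqr in *; nra).
pose proof (sinh_cos_ge_of_cosh_sin_gt (cosh x) (sinh x) (cos y) (Rabs (sin y)) (sin d)
  (cosh_sq_sub_sinh_sq x) Hcos (cosh_pos x)
  (conj (Rabs_pos _) (Rabs_sin_le d y ltac:(lra) Hy)) ltac:(nra) Hre).
nra.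
Qed.

Lemma Csinh_pair x y : Csinh (x, y) = (sinh x * cos y, cosh x * sin y).
Proof.
unfold Csinh, Cexp. apply injective_projections; cbn; unfold sinh, cosh;
  rewrite ?cos_neg, ?sin_neg; field.
Qed.

Lemma Csinh_opp (z : C) : Csinh (- z) = (- Csinh z)%C.
Proof. unfold Csinh, Cdiv. replace (- - z)%C with z by ring. ring. Qed.

Lemma cos_le_Cmod_one_add_Cexp_sinh d (z : C) : 0 < d < PI / 2 -> Rabs (Im z) <= d ->
  0 <= Re (PI * Csinh z) -> cos (PI / 2 * sin d) <= Cmod (1 + Cexp (PI * Csinh z)).
Proof.
destruct z as [x y]. cbn [Im]. intros Hd Hy Hre.
assert (Hw : (PI * Csinh (x, y))%C = (PI * (sinh x * cos y), PI * (cosh x * sin y))).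
{ rewrite Csinh_pair. apply injective_projections; cbn; ring. }
rewrite Hw in *. cbn [Re fst] in Hre.
pose proof (one_add_exp_strip_sq_ge d x y Hd Hy ltac:(pose proof PI_RGT_0; nra)) as Hsq.
pose proof (Cmod_one_add_Cexp_sq (PI * (sinh x * cos y), PI * (cosh x * sin y))) as Hmod.
cbn [Re Im fst snd] in Hmod. rewrite <- Hmod in Hsq.
assert (0 <= cos (PI / 2 * sin d)).
{ pose proof PI_RGT_0. pose proof (SIN_bound d). apply cos_ge_0; nra. }
apply Rsqr_incr_0; [unfold Rsqr; nra | assumption | apply Cmod_ge_0].
Qed.

Lemma Cmod_exp_div_one_add_exp_le d (z : C) : 0 < d < PI / 2 -> Rabs (Im z) <= d ->
  Cmod (Cexp (PI * Csinh z)) / Cmod (1 + Cexp (PI * Csinh z)) <= c_d d.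
Proof.
intros Hd Hy.
pose proof PI_RGT_0.
set (m := cos (PI / 2 * sin d)).
assert (Hm : 0 < m).
{ assert (sin d < 1) by (rewrite <- sin_PI2; apply sin_increasing_1; lra).
  assert (0 < sin d) by (apply sin_gt_0; lra). apply cos_gt_0; nra. }
assert (Hinv_m : 0 < 1 / m) by (apply Rdiv_lt_0_compat; lra).
unfold c_d; fold m.
set (w := (PI * Csinh z)%C).
destruct (Rle_lt_dec 0 (Re w)) as [Hre | Hre].
- pose proof (cos_le_Cmod_one_add_Cexp_sinh d z Hd Hy Hre) as Hlow. fold m w in Hlow.
  assert (Htri : Cmod (Cexp w) <= Cmod (1 + Cexp w) + 1).
  { replace (Cexp w) with ((1 + Cexp w) + - (1))%C at 1 by ring.
    eapply Rle_trans; [apply Cmod_triangle|]. rewrite Cmod_m1. lra. }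
  apply Rle_trans with (1 + 1 / Cmod (1 + Cexp w)).
  + apply Rmult_le_reg_r with (Cmod (1 + Cexp w)); [lra|].
    field_simplify; lra.
  + enough (1 / Cmod (1 + Cexp w) <= 1 / m) by lra.
    apply Rmult_le_compat_l; [lra|]. apply Rinv_le_contravar; lra.
- (* for Re w < 0, |e^w / (1 + e^w)| = 1 / |1 + e^(-w)| and -w = PI sinh (-z) *)
  assert (Hopp : (PI * Csinh (- z))%C = (- w)%C) by (rewrite Csinh_opp; unfold w; ring).
  pose proof (cos_le_Cmod_one_add_Cexp_sinh d (- z) Hd) as Hlow.
  rewrite Hopp in Hlow. fold m in Hlow.
  specialize (Hlow ltac:(change (Im (- z)) with (- Im z); rewrite Rabs_Ropp; exact Hy)
    ltac:(change (Re (- w)) with (- Re w); lra)).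
  rewrite <- (Cmod_one_add_Cexp_opp w), Cmod_Cexp.
  pose proof (exp_pos (Re w)).
  replace (exp (Re w) / (Cmod (1 + Cexp (- w)) * exp (Re w))) with (1 / Cmod (1 + Cexp (- w)))
    by (field; lra).
  enough (1 / Cmod (1 + Cexp (- w)) <= 1 / m) by lra.
  apply Rmult_le_compat_l; [lra|]. apply Rinv_le_contravar; lra.
Qed.

Lemma Cmod_Fc_le d (z : C) : 0 < d < PI / 2 -> Rabs (Im z) <= d -> Cmod (Fc z) <= ct_d d.
Proof.
intros Hd Hy.
unfold Fc; cbv zeta.
eapply Rle_trans; [apply Cmod_log_quotient_le|].
unfold ct_d. apply one_add_div_mul_le.
- split; [|apply Cmod_exp_div_one_add_exp_le; assumption].
  apply Rmult_le_pos; [apply Cmod_ge_0 | apply Rinv_nonneg, Cmod_ge_0].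
- pose proof (ln_one_add_Cmod_div_le (1 + Cexp (PI * Csinh z))) as Hlog.
  replace (1 + Cexp (PI * Csinh z) - 1)%C with (Cexp (PI * Csinh z)) in Hlog by ring.
  exact Hlog.
Qed.

Lemma is_derive_n_exp_scal x n t :
  is_derive_n (fun t => exp (x * t)) n t (x ^ n * exp (x * t)).
Proof.
apply is_derive_n_comp_scal; [| apply is_derive_n_exp].
apply filter_forall. intros y [|k] _; [exact I|].
apply (ex_derive_ext exp); [intros; symmetry; apply is_derive_n_unique, is_derive_n_exp|].
apply ex_derive_Reals_1, derivable_pt_exp.
Qed.

(* Taylor's formula for t |-> exp (x t) on [0, 1]; the Lagrange remainder has the sign
   of x ^ S n *)
Lemma exp_ge_taylor_pow_nonneg x n : 0 <= x ^ S n ->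
  sum_f_R0 (fun k => x ^ k / INR (Factorial.fact k)) n <= exp x.
Proof.
intros Hx.
assert (Hder : forall m t, Derive_n (fun t => exp (x * t)) m t = x ^ m * exp (x * t))
  by (intros; apply is_derive_n_unique, is_derive_n_exp_scal).
destruct (Taylor_Lagrange (fun t => exp (x * t)) n 0 1 Rlt_0_1) as [zeta [_ Htaylor]].
{ intros t _ [|k] _; [exact I|].
  apply (ex_derive_ext (fun t => x ^ k * exp (x * t))); [intros; symmetry; apply Hder|].
  auto_derive; exact I. }
rewrite Rmult_1_r in Htaylor. rewrite Htaylor.
rewrite Hder, Rminus_0_r, pow1.
match goal with |- ?A <= ?B + _ => replace B with A end.
- assert (0 < INR (Factorial.fact (S n))) by apply INR_fact_lt_0.
  pose proof (exp_pos (x * zeta)).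
  assert (0 <= / INR (Factorial.fact (S n)) * (x ^ S n * exp (x * zeta))).
  { apply Rmult_le_pos; [apply Rlt_le, Rinv_0_lt_compat; lra | nra]. }
  unfold Rdiv; lra.
- apply sum_eq. intros k _. rewrite Hder, pow1, Rmult_0_r, exp_0. field.
  apply INR_fact_neq_0.
Qed.

Lemma exp_ge_taylor3 x : 1 + x + x ^ 2 / 2 + x ^ 3 / 6 <= exp x.
Proof.
assert (Hx4 : 0 <= x ^ 4) by (replace (x ^ 4) with ((x ^ 2) ^ 2) by ring; apply pow2_ge_0).
pose proof (exp_ge_taylor_pow_nonneg x 3 Hx4).
simpl in *. lra.
Qed.

Lemma exp_neg_ge_taylor5 h :
  1 - h + h ^ 2 / 2 - h ^ 3 / 6 + h ^ 4 / 24 - h ^ 5 / 120 <= exp (- h).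
Proof.
assert (Hh6 : 0 <= (- h) ^ 6) by (replace ((- h) ^ 6) with ((h ^ 3) ^ 2) by ring; apply pow2_ge_0).
pose proof (exp_ge_taylor_pow_nonneg (- h) 5 Hh6).
simpl in *. lra.
Qed.

Lemma exp_neg_one_ge : 103 / 280 <= exp (-1).
Proof.
pose proof (exp_ge_taylor_pow_nonneg (-1) 7 ltac:(simpl; lra)).
simpl in *. lra.
Qed.

Lemma PI_ge : 314148 / 100000 <= PI.
Proof.
destruct (PI_2_3_7_ineq 1) as [H _].
unfold tg_alt, PI_2_3_7_tg, Ratan_seq in H. simpl in H. lra.
Qed.

Lemma exp_PI_div_12_ge : 1299 / 1000 <= exp (PI / 12).
Proof. pose proof PI_ge. pose proof (exp_ge_taylor3 (PI / 12)). nra. Qed.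

Lemma pow_bounds_of_Rabs_le t w k : Rabs t <= w -> - w ^ k <= t ^ k <= w ^ k.
Proof.
intros H. apply Rabs_le_between.
rewrite <- RPow_abs. apply pow_incr. split; [apply Rabs_pos | exact H].
Qed.

(* a polynomial inequality in S is checked on [c - w, c + w] by bounding each power of S - c *)
Ltac check_on_segment S c w :=
  let Hb := fresh in
  assert (Hb : Rabs (S - c) <= w) by (apply Rabs_le; lra);
  pose proof (pow_bounds_of_Rabs_le _ _ 1 Hb); pose proof (pow_bounds_of_Rabs_le _ _ 2 Hb);
  pose proof (pow_bounds_of_Rabs_le _ _ 3 Hb); pose proof (pow_bounds_of_Rabs_le _ _ 4 Hb);
  lra.

(* 10609 / 78400 = (103 / 280) ^ 2 <= exp (-2) *)
Lemma taylor_cubic_bound S : 1 <= S <= 7 / 2 ->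
  1 - 299 / 1000 * S
  <= 10609 / 78400 * (1 + S) * (1 + (2 - S) + (2 - S) ^ 2 / 2 + (2 - S) ^ 3 / 6).
Proof.
intros HS.
destruct (Rle_lt_dec S (3/2)); [check_on_segment S (5/4) (1/4)|].
destruct (Rle_lt_dec S (13/8)); [check_on_segment S (25/16) (1/16)|].
destruct (Rle_lt_dec S (7/4)); [check_on_segment S (27/16) (1/16)|].
destruct (Rle_lt_dec S (15/8)); [check_on_segment S (29/16) (1/16)|].
destruct (Rle_lt_dec S 2); [check_on_segment S (31/16) (1/16)|].
destruct (Rle_lt_dec S (9/4)); [check_on_segment S (17/8) (1/8)|].
destruct (Rle_lt_dec S (11/4)); [check_on_segment S (5/2) (1/4)|].
destruct (Rle_lt_dec S (13/4)); [check_on_segment S 3 (1/4)|].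
check_on_segment S (27/8) (1/8).
Qed.

Lemma one_sub_mul_le_one_add_mul_exp_neg S : 0 < S ->
  1 - 299 / 1000 * S <= (1 + S) * exp (- S).
Proof.
intros HS.
pose proof (exp_pos (- S)).
destruct (Rle_lt_dec S 1) as [Hsmall | Hbig].
{ pose proof (exp_neg_ge_taylor5 S).
  assert (0 <= 299/1000 - S/2 + S^2/3 - S^3/8 + S^4/30 - S^5/120) by nra.
  nra. }
destruct (Rle_lt_dec S (1000 / 299)) as [Hmid | Hlarge]; [|nra].
assert (Hsplit : exp (- S) = exp (-1) * exp (-1) * exp (2 - S))
  by (rewrite <- !exp_plus; f_equal; ring).
pose proof (exp_ge_taylor3 (2 - S)). pose proof exp_neg_one_ge. pose proof (exp_pos (2 - S)).
pose proof (taylor_cubic_bound S ltac:(lra)).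
assert (10609 / 78400 * (1 + (2 - S) + (2 - S) ^ 2 / 2 + (2 - S) ^ 3 / 6) <= exp (- S)).
{ rewrite Hsplit. assert (10609 / 78400 <= exp (-1) * exp (-1)) by nra. nra. }
nra.
Qed.

Lemma Fr_le x : Fr x <= 1299 / 1000.
Proof.
unfold Fr. set (T := exp (PI * sinh x)).
assert (HT : 0 < T) by apply exp_pos.
set (S := ln (1 + T)).
assert (HS : 0 < S) by (unfold S; rewrite <- ln_1; apply ln_increasing; lra).
assert (Hinv : exp (- S) = / (1 + T)) by (unfold S; rewrite exp_Ropp, exp_ln; lra).
rewrite exp_Ropp; fold T.
replace (1 / (1 + / T)) with (1 - exp (- S)) by (rewrite Hinv; field; lra).
apply Rmult_le_reg_l with S; [exact HS|].
replace (S * ((1 + S) / S * (1 - exp (- S)))) with ((1 + S) * (1 - exp (- S))) by (field; lra).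
pose proof (one_sub_mul_le_one_add_mul_exp_neg S HS). lra.
Qed.

Theorem lemma12 (d : R) (hd0 : 0 < d) (hd1 : d < PI / 2) :
  (forall z : C, Rabs (Im z) <= d -> Cmod (Fc z) <= ct_d d) /\
  (forall x : R, Fr x <= exp (PI / 12)).
Proof.
split.
- intros z Hz. apply (Cmod_Fc_le d); [lra | exact Hz].
- intros x. pose proof (Fr_le x). pose proof exp_PI_div_12_ge. lra.
Qed.
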